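(* Let $N,B,W,T$ be positive integers with $N\le B$, $B+1\le W$ and $T\ge B$, and set $T_{\mathrm{eff}}=\min(T,W-1)$. If a rate $R$ is achievable with delay $T$ over the channel $\mathcal{C}(N,B,W)$, then \[ \left(\frac{R}{1-R}\right)B+N\le T_{\mathrm{eff}}+1 . \]
   Context: Channel $\mathcal{C}(N,B,W)$: a packet erasure channel on a sequence of channel uses $i=0,1,2,\dots$ such that in every sliding window of $W$ consecutive channel uses, the set of erased positions is either a single burst of consecutive erasures of length at most $B$, or consists of at most $N$ erasures in arbitrary positions. Streaming code (equal source–channel rates): at each time $i\ge 0$ the encoder observes a source symbol $\mathbf{s}[i]\in\mathbb{F}_q^k$ and transmits $\mathbf{x}[i]=f_i(\mathbf{s}[0],\dots,\mathbf{s}[i])\in\mathbb{F}_q^n$; the channel output is $\mathbf{y}[i]=\mathbf{x}[i]$ or $\mathbf{y}[i]=\star$ (erasure). The code has delay $T$ if there are decoding functions with $\mathbf{s}[i]=g_i(\mathbf{y}[0],\dots,\mathbf{y}[i+T])$ for every $i\ge0$, every source sequence and every erasure pattern allowed by the channel. Its rate is $R=k/n$. A rate $R$ is achievable with delay $T$ over $\mathcal{C}(N,B,W)$ if such a streaming code of rate $R$ exists over some field size $q$. *)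

From HB Require Import structures.
From mathcomp Require Import all_boot all_order all_algebra all_field.
Set Implicit Arguments. Unset Strict Implicit. Unset Printing Implicit Defensive.
Import Order.TTheory GRing.Theory Num.Theory.

(* An erasure pattern e : nat -> bool (e t = true iff channel use t is erased)
   is admissible for C(N,B,W) if in every window {j, ..., j+W-1} of W
   consecutive channel uses, the erased positions either number at most N,
   or form a single burst of consecutive positions of length at most B
   (the interval [a, a+L) intersected with the window, with L <= B). *)
Definition admissible_erasures (N B W : nat) (e : nat -> bool) : Prop :=
  forall j : nat,
    (count e (iota j W) <= N)%N \/
    exists a L : nat, (L <= B)%N /\
      forall t : nat, (j <= t < j + W)%N -> e t = (a <= t < a + L)%N.

Definition channel_output (V : Type) (e : nat -> bool) (x : nat -> V)
  : nat -> option V := fun t => if e t then None else Some (x t).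

(* A streaming code over field F with source symbols in F^k, channel packets in
   F^n, delay T, correcting every admissible erasure pattern of C(N,B,W).
   enc i s = f_i(s[0..i]) (causality), dec i y = g_i(y[0..i+T]). *)
Definition streaming_code (F : finFieldType) (k n T N B W : nat) : Prop :=
  exists (enc : nat -> (nat -> 'rV[F]_k) -> 'rV[F]_n)
         (dec : nat -> (nat -> option 'rV[F]_n) -> 'rV[F]_k),
    (forall i (s s' : nat -> 'rV[F]_k),
        (forall j, (j <= i)%N -> s j = s' j) -> enc i s = enc i s') /\
    (forall i (y y' : nat -> option 'rV[F]_n),
        (forall j, (j <= i + T)%N -> y j = y' j) -> dec i y = dec i y') /\
    (forall (s : nat -> 'rV[F]_k) (e : nat -> bool),
        admissible_erasures N B W e ->
        forall i, dec i (channel_output e (fun t => enc t s)) = s i).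

Definition achievable (N B W T : nat) (R : rat) : Prop :=
  exists (F : finFieldType) (k n : nat),
    (0 < k)%N /\ (0 < n)%N /\ R = (k%:R / n%:R)%R /\ streaming_code F k n T N B W.

From HB Require Import structures.
From mathcomp Require Import all_boot all_order all_algebra all_field.
From mathcomp Require Import zify ring.
Import Order.TTheory GRing.Theory Num.Theory.

(* Let T' = min(T, W-1), U = T' + 1 - N and
   P = B + U, and erase the first B uses of every period of length P.  Seen
   only through a window [t, t+T], this pattern is admissible for C(N,B,W):
   a window of length at most T'+1 meets either a single burst, or the tail of
   one burst and the head of the next, which lie U apart and so contain at
   most N erasures together.  Hence every source symbol s[t] is a function of
   the earlier symbols and the unerased packets in [t, t+T], so the L*P source
   symbols of the first L periods are determined by the L*U + T unerased
   packets before time L*P + T, giving k L P <= n (L U + T) for all L, i.e.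
   k P <= n U, which rearranges into the claimed bound with R = k/n. *)

Definition periodic_bursts (P B : nat) : pred nat := fun u => u %% P < B.

Lemma periodic_burstsD (P B q d : nat) : 0 < P -> d < 2 * P ->
  periodic_bursts P B (q * P + d) = (d < B) || (P <= d < P + B).
Proof.
move=> P_gt0 ltd2P; rewrite /periodic_bursts modnMDl.
have [ltdP | lePd] := ltnP d P.
  by rewrite modn_small //; apply/idP/idP; lia.
have -> : d = P + (d - P) by lia.
by rewrite modnDl modn_small; [apply/idP/idP; lia | lia].
Qed.

Lemma count_iota_leq_size (p : pred nat) (j W : nat) (s : seq nat) :
  (forall u, j <= u < j + W -> p u -> u \in s) -> count p (iota j W) <= size s.
Proof.
move=> sub_ps; rewrite -size_filter; apply: uniq_leq_size.
  exact/filter_uniq/iota_uniq.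
by move=> u; rewrite mem_filter mem_iota => /andP[pu ju]; apply: sub_ps.
Qed.

Lemma windowed_periodic_bursts_admissible (N B W T P t : nat) :
  0 < P -> N <= B -> B <= P -> minn W T.+1 <= P - B + N ->
  admissible_erasures N B W
    (fun u => periodic_bursts P B u && (t <= u <= t + T)).
Proof.
move=> P_gt0 leNB leBP len_window j.
set lo := maxn j t; set hi := minn (j + W) (t + T + 1).
have lo_def : lo = maxn j t by [].
have hi_def : hi = minn (j + W) (t + T + 1) by [].
set base := lo %/ P * P.
have base_lo : lo = base + lo %% P by rewrite /base -divn_eq.
have lt_mod : lo %% P < P by rewrite ltn_pmod.
(* Inside the window the pattern meets at most two consecutive bursts. *)
have pattern_in_window u : j <= u < j + W ->
    periodic_bursts P B u && (t <= u <= t + T) =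
    (lo <= u < hi) && ((u < base + B) || (base + P <= u < base + P + B)).
  move=> ju; have [u_in | u_out] := boolP (lo <= u < hi); last first.
    by apply/negbTE/negP => /andP[_ tu]; move/negP: u_out; apply; lia.
  have -> : u = lo %/ P * P + (u - base) by rewrite -/base; lia.
  by rewrite periodic_burstsD //; [apply/idP/idP; lia | lia].
clearbody base lo hi.
have [hi_le | base_lt_hi] := leqP hi (base + P).
  right; exists lo, (minn hi (base + B) - lo); split; first by lia.
  by move=> u ju; rewrite pattern_in_window //; apply/idP/idP; lia.
have [leBmod | ltmodB] := leqP B (lo %% P).
  right; exists (base + P), (minn hi (base + P + B) - (base + P)).
  split; first by lia.
  by move=> u ju; rewrite pattern_in_window //; apply/idP/idP; lia.
left; apply: (@leq_trans
   (size (iota lo (base + B - lo) ++ iota (base + P) (hi - (base + P))))).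
  apply: count_iota_leq_size => u ju.
  by rewrite pattern_in_window // mem_cat !mem_iota => ?; apply/orP; lia.
by rewrite size_cat !size_iota; lia.
Qed.

Lemma sum_unerased_periods (P B L : nat) : B <= P ->
  \sum_(0 <= i < L * P) (~~ periodic_bursts P B i : nat) = L * (P - B).
Proof.
move=> leBP; elim: L => [|L IHL]; first by rewrite mul0n big_geq.
rewrite mulSnr (big_cat_nat (leq0n (L * P)) (leq_addr P _)) /= IHL mulSnr.
congr (_ + _); rewrite -{1}(add0n (L * P)) big_addn addKn.
rewrite (@eq_big_nat _ _ _ 0 P _ (fun i => (B <= i : nat))); last first.
  by move=> i ltiP; rewrite /periodic_bursts addnC modnMDl modn_small -?leqNgt; lia.
rewrite (big_cat_nat (leq0n B) leBP) /= big_nat_cond big1 ?add0n; last first.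
  by move=> i /andP[/andP[_ ltiB] _]; rewrite leqNgt ltiB.
rewrite (@eq_big_nat _ _ _ B P _ (fun=> 1)); last by move=> i /andP[->].
by rewrite sum_nat_const_nat muln1.
Qed.

Lemma card_unerased_periods (P B L T : nat) : B <= P ->
  #|[pred u : 'I_(L * P + T) | ~~ periodic_bursts P B u]| <= L * (P - B) + T.
Proof.
move=> leBP.
have -> : #|[pred u : 'I_(L * P + T) | ~~ periodic_bursts P B u]| =
          \sum_(0 <= i < L * P + T) (~~ periodic_bursts P B i : nat).
  rewrite -sum1_card big_mkcond /= big_mkord; apply: eq_bigr => i _.
  by rewrite inE; case: (~~ _).
rewrite (big_cat_nat (leq0n _) (leq_addr T _)) /= sum_unerased_periods //.
rewrite leq_add2l; apply: (@leq_trans (\sum_(L * P <= i < L * P + T) 1)).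
  by apply: leq_sum => i _; case: (~~ _).
by rewrite sum_nat_const_nat muln1 addKn.
Qed.

Section UnerasedPacketsDetermineSources.

Variables (F : finFieldType) (k n T N B W : nat) (e : pred nat).
Variables (enc : nat -> (nat -> 'rV[F]_k) -> 'rV[F]_n)
          (dec : nat -> (nat -> option 'rV[F]_n) -> 'rV[F]_k).
Hypothesis enc_causal : forall i (s s' : nat -> 'rV[F]_k),
  (forall j, j <= i -> s j = s' j) -> enc i s = enc i s'.
Hypothesis dec_causal : forall i (y y' : nat -> option 'rV[F]_n),
  (forall j, j <= i + T -> y j = y' j) -> dec i y = dec i y'.
Hypothesis dec_correct : forall (s : nat -> 'rV[F]_k) (e' : nat -> bool),
  admissible_erasures N B W e' ->
  forall i, dec i (channel_output e' (fun t => enc t s)) = s i.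
Hypothesis windowed_admissible : forall t,
  admissible_erasures N B W (fun u => e u && (t <= u <= t + T)).

(* Decode s[t] from the pattern [e] restricted to [t, t+T]: the decoder then
   only sees unerased packets of that window and packets before time t. *)
Lemma source_determined_by_unerased (s s' : nat -> 'rV[F]_k) (t : nat) :
  (forall j, j < t -> s j = s' j) ->
  (forall u, t <= u <= t + T -> ~~ e u -> enc u s = enc u s') ->
  s t = s' t.
Proof.
move=> eq_before eq_unerased.
rewrite -(dec_correct s _ (windowed_admissible t) t).
rewrite -(dec_correct s' _ (windowed_admissible t) t).
apply: dec_causal => u leutT; rewrite /channel_output.
have [ltut | leut] := ltnP u t.
  by rewrite (@enc_causal u s s') // => j leju; apply: eq_before; lia.
case eu: (e u) => /=; first by rewrite leutT.
by rewrite eq_unerased ?leut ?leutT ?eu.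
Qed.

Lemma source_prefix_determined_by_unerased (s s' : nat -> 'rV[F]_k) (M : nat) :
  (forall u, u < M + T -> ~~ e u -> enc u s = enc u s') ->
  forall t, t < M -> s t = s' t.
Proof.
move=> eq_unerased; elim/ltn_ind => t IHt lttM.
apply: source_determined_by_unerased => [j ltjt | u leutT eu].
  by apply: IHt => //; lia.
by apply: eq_unerased => //; lia.
Qed.

End UnerasedPacketsDetermineSources.

Lemma streaming_code_capacity (F : finFieldType) (k n T N B W M : nat)
    (e : pred nat) :
  streaming_code F k n T N B W ->
  (forall t, admissible_erasures N B W (fun u => e u && (t <= u <= t + T))) ->
  k * M <= n * #|[pred u : 'I_(M + T) | ~~ e u]|.
Proof.
move=> [enc [dec [enc_causal [dec_causal dec_correct]]]] windowed_admissible.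
pose extend (f : {ffun 'I_M -> 'rV[F]_k}) (j : nat) : 'rV[F]_k :=
  if insub j is Some i then f i else 0%R.
pose unerased_packets (f : {ffun 'I_M -> 'rV[F]_k}) :
    {ffun {u : 'I_(M + T) | ~~ e u} -> 'rV[F]_n} :=
  [ffun v => enc (val (val v)) (extend f)].
have inj_unerased_packets : injective unerased_packets.
  move=> f g /ffunP eq_fg; apply/ffunP => i.
  have := @source_prefix_determined_by_unerased F k n T N B W e enc dec
    enc_causal dec_causal dec_correct windowed_admissible (extend f) (extend g)
    M _ i (ltn_ord i).
  rewrite /extend valK; apply => u ltuMT eu.
  by have := eq_fg (exist _ (Ordinal ltuMT) eu); rewrite !ffunE.
have := leq_card _ inj_unerased_packets.
rewrite !card_ffun !card_mx card_ord card_sig -!expnM !mul1n leq_exp2l //.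
exact: card_finNzRing_gt1.
Qed.

Lemma leq_of_linear_bound (a b c : nat) : (forall L, a * L <= b * L + c) -> a <= b.
Proof.
move=> bound; rewrite leqNgt; apply/negP => ltba.
by have := bound c.+1; rewrite leqNgt; apply/negP; nia.
Qed.

Lemma streaming_code_rate_bound {F : finFieldType} {k n N B W T : nat} :
  N <= B -> B + 1 <= W -> B <= T -> streaming_code F k n T N B W ->
  k * (B + (minn T (W - 1) + 1 - N)) <= n * (minn T (W - 1) + 1 - N).
Proof.
move=> leNB ltBW leBT code; set U := minn T (W - 1) + 1 - N.
have windowed t := @windowed_periodic_bursts_admissible N B W T (B + U) t.
apply: (@leq_of_linear_bound _ _ (n * T)) => L.
have := @streaming_code_capacity F k n T N B W (L * (B + U)) _ code
  (fun t => windowed t ltac:(lia) leNB ltac:(lia) ltac:(lia)).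
move/leq_trans/(_ (leq_mul (leqnn n) (card_unerased_periods _ _ L T (leq_addr U B)))).
by rewrite addKn -mulnA (mulnC _ L) -[n * U * L]mulnA (mulnC U L) -mulnDr.
Qed.

Local Open Scope ring_scope.

Lemma rate_ratio_bound (R : realFieldType) (k n b u : nat) :
  (k < n)%N -> (k * (b + u) <= n * u)%N ->
  k%:R / n%:R / (1 - k%:R / n%:R) * b%:R <= u%:R :> R.
Proof.
move=> ltkn rate.
have n_gt0 : (0 : R) < n%:R by rewrite ltr0n; lia.
have nk_gt0 : (0 : R) < n%:R - k%:R by rewrite subr_gt0 ltr_nat.
have -> : k%:R / n%:R / (1 - k%:R / n%:R) = k%:R / (n%:R - k%:R) :> R.
  by field; rewrite lt0r_neq0 // lt0r_neq0.
rewrite mulrAC ler_pdivrMr // mulrBr lerBrDr mulrC.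
by rewrite -!natrM -natrD ler_nat -mulnDl mulnC (mulnC u).
Qed.

Theorem theorem1 (N B W T : nat) (R : rat) :
  (0 < N)%N -> (0 < B)%N -> (0 < W)%N -> (0 < T)%N ->
  (N <= B)%N -> (B + 1 <= W)%N -> (B <= T)%N ->
  achievable N B W T R ->
  (R / (1 - R)) * B%:R + N%:R <= (minn T (W - 1))%:R + 1.
Proof.
move=> _ B_gt0 _ _ leNB ltBW leBT [F [k [n [k_gt0 [_ [-> code]]]]]].
have := streaming_code_rate_bound leNB ltBW leBT code.
set U := (minn T (W - 1) + 1 - N)%N => rate.
have ltkn : (k < n)%N by nia.
have -> : (minn T (W - 1))%:R + 1 = U%:R + N%:R :> rat.
  by rewrite natr1 -natrD; congr _%:R; rewrite /U; lia.
by rewrite lerD2r rate_ratio_bound.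
Qed.
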